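(* Let $f^{(0)}(w),\dots,f^{(n)}(w)$ be real $C^2$ functions in a Jordan domain in $\mathbb{C}$ (coordinate $w=x+iy$) such that $f^{(0)}_{ww}f^{(0)}_{\bar w\bar w}>0$. Then $f(w,t)=\sum_{m=0}^n f^{(m)}(w)t^m/m!$ satisfies $f_{w\bar w}=t\sqrt{f_{ww}f_{\bar w\bar w}}+o(t^n)$ as $t\to0$ if and only if, for $m=0,\dots,n$, $$f^{(m)}_{w\bar w}=\frac{m\sum_{r=0}^{m-1}\binom{m-1}{r}f^{(r)}_{ww}f^{(m-r-1)}_{\bar w\bar w}-\frac{1}{m+1}\sum_{r=2}^{m-1}\binom{m+1}{r}f^{(r)}_{w\bar w}f^{(m-r+1)}_{w\bar w}}{2^{1-\delta_{m1}}\sqrt{f^{(0)}_{ww}f^{(0)}_{\bar w\bar w}}}.$$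
   Context: Wirtinger derivatives: $f_w=\tfrac12(f_x-if_y)$, $f_{\bar w}=\tfrac12(f_x+if_y)$. $\delta_{mn}=1$ if $m=n$, else $0$; empty sums are $0$. *)

From Stdlib Require Import Reals Factorial.
From Coquelicot Require Import Coquelicot.
Open Scope R_scope.

Definition jordan_curve (gamma : R -> C) : Prop :=
  (forall s, continuous gamma s) /\
  gamma 0 = gamma 1 /\
  (forall s1 s2, 0 <= s1 < 1 -> 0 <= s2 < 1 -> gamma s1 = gamma s2 -> s1 = s2).

Definition on_curve (gamma : R -> C) (z : C) : Prop :=
  exists s, 0 <= s <= 1 /\ gamma s = z.

Definition joinable_off (gamma : R -> C) (z1 z2 : C) : Prop :=
  exists p : R -> C, (forall s, continuous p s) /\ p 0 = z1 /\ p 1 = z2 /\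
    (forall s, 0 <= s <= 1 -> ~ on_curve gamma (p s)).

(* The interior of the Jordan curve: the points off the curve whose
   (path-)component in the complement of the curve is bounded. *)
Definition jordan_interior (gamma : R -> C) (z : C) : Prop :=
  ~ on_curve gamma z /\
  exists M, forall z', joinable_off gamma z z' -> Cmod z' <= M.

Definition jordan_domain (U : C -> Prop) : Prop :=
  exists gamma, jordan_curve gamma /\ forall z, U z <-> jordan_interior gamma z.

Definition px (f : C -> R) : C -> R := fun z => Derive (fun s => f (s, snd z)) (fst z).
Definition py (f : C -> R) : C -> R := fun z => Derive (fun s => f (fst z, s)) (snd z).

Definition C1_on (U : C -> Prop) (f : C -> R) : Prop :=
  forall z, U z ->
    ex_derive (fun s => f (s, snd z)) (fst z) /\
    ex_derive (fun s => f (fst z, s)) (snd z) /\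
    continuous f z /\ continuous (px f) z /\ continuous (py f) z.

Definition C2_on (U : C -> Prop) (f : C -> R) : Prop :=
  C1_on U f /\ C1_on U (px f) /\ C1_on U (py f).

Definition cx (g : C -> C) : C -> C := fun z =>
  (Derive (fun s => fst (g (s, snd z))) (fst z),
   Derive (fun s => snd (g (s, snd z))) (fst z)).
Definition cy (g : C -> C) : C -> C := fun z =>
  (Derive (fun s => fst (g (fst z, s))) (snd z),
   Derive (fun s => snd (g (fst z, s))) (snd z)).

Definition Dw (g : C -> C) : C -> C := fun z => (/ 2 * (cx g z - Ci * cy g z))%C.
Definition Dwb (g : C -> C) : C -> C := fun z => (/ 2 * (cx g z + Ci * cy g z))%C.

Definition toC (f : C -> R) : C -> C := fun z => RtoC (f z).

Definition f_ww (f : C -> R) : C -> C := Dw (Dw (toC f)).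
Definition f_wbwb (f : C -> R) : C -> C := Dwb (Dwb (toC f)).
Definition f_wwb (f : C -> R) : C -> C := Dwb (Dw (toC f)).

Fixpoint csum (k : nat) (a : nat -> C) : C :=
  match k with
  | O => RtoC 0
  | S k' => (csum k' a + a k')%C
  end.

(* sum over lo <= r < hi, i.e. r = lo, ..., hi-1 (empty if hi <= lo) *)
Definition csum_range (lo hi : nat) (a : nat -> C) : C :=
  csum (hi - lo) (fun j => a (lo + j)%nat).

Definition binom (n k : nat) : R := Binomial.C n k.

Definition ftaylor (fm : nat -> C -> R) (n : nat) (t : R) : C -> R :=
  fun z => sum_f_R0 (fun m => fm m z * t ^ m / INR (fact m)) n.

Definition kdelta (m k : nat) : nat := if Nat.eqb m k then 1%nat else 0%nat.

(* Fix w.  The Wirtinger derivatives of f(., t) at w are polynomials in t of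
   degree n whose k-th coefficients are those of f^(k) divided by k!, and since f
   is real, f_ww f_wbwb = |f_ww|^2 >= 0.  Put F = f_wwb and G = t sqrt(f_ww f_wbwb).
   Letting t -> 0, F - G = o(t^n) forces F(0) = 0 and, if n >= 1,
   F'(0) = sqrt(f^(0)_ww f^(0)_wbwb); then F + G = t (2 F'(0) + O(t)) with
   F'(0) > 0, so F - G = o(t^n) is equivalent to
   (F - G)(F + G) = F^2 - t^2 f_ww f_wbwb = O(t^(n+2)).  Up to O(t^(n+2)) the
   right-hand side is a polynomial in t, and its coefficient of t^(m+1) vanishes
   exactly when the m-th recursion formula holds.  The Jordan domain enters only
   through its openness, which lets the Taylor sum be differentiated termwise twice. *)

From Stdlib Require Import Reals Lra Lia Factorial.
From Coquelicot Require Import Coquelicot.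
Open Scope R_scope.

(** * Finite sums and polynomials in t *)

Lemma csum_ext N (a b : nat -> C) :
  (forall k, (k < N)%nat -> a k = b k) -> csum N a = csum N b.
Proof. induction N as [|N IH]; intros H; simpl; [easy|]. rewrite IH, H; auto. Qed.

Lemma csum_Sl N (a : nat -> C) :
  csum (S N) a = (a 0%nat + csum N (fun k => a (S k)))%C.
Proof. induction N as [|N IH]; simpl in *; [ring|]. rewrite IH. ring. Qed.

Lemma csum_scal N x (a : nat -> C) : csum N (fun k => x * a k)%C = (x * csum N a)%C.
Proof. induction N as [|N IH]; simpl; [ring|]. rewrite IH. ring. Qed.

Lemma csum_plus N (a b : nat -> C) :
  csum N (fun k => a k + b k)%C = (csum N a + csum N b)%C.
Proof. induction N as [|N IH]; simpl; [ring|]. rewrite IH. ring. Qed.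

Lemma csum_eq_0 N (a : nat -> C) : (forall k, (k < N)%nat -> a k = 0%C) -> csum N a = 0%C.
Proof.
  induction N as [|N IH]; intros H; simpl; [easy|].
  rewrite IH, H; [ring | lia | intros; apply H; lia].
Qed.

Definition peval (N : nat) (u : nat -> C) (t : R) : C := csum N (fun k => u k * RtoC (t ^ k))%C.

Implicit Types u v : nat -> C.

Definition cauchy_prod (u v : nat -> C) (k : nat) : C :=
  csum (S k) (fun r => u r * v (k - r)%nat)%C.

Definition shift_coef (u : nat -> C) (k : nat) : C := match k with O => 0%C | S j => u j end.

Definition trunc (n : nat) (u : nat -> C) (k : nat) : C := if (k <=? n)%nat then u k else 0%C.

Lemma peval_ext N (u v : nat -> C) t :
  (forall k, (k < N)%nat -> u k = v k) -> peval N u t = peval N v t.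
Proof. intros H. apply csum_ext. intros k Hk. now rewrite H. Qed.

Lemma peval_Sl N u t :
  peval (S N) u t = (u 0%nat + RtoC t * peval N (fun k => u (S k)) t)%C.
Proof.
  unfold peval. rewrite csum_Sl, <- csum_scal. simpl.
  f_equal; [ring|]. apply csum_ext. intros k _. rewrite RtoC_mult. ring.
Qed.

Lemma peval_shift N u t : peval (S N) (shift_coef u) t = (RtoC t * peval N u t)%C.
Proof. rewrite peval_Sl. change (fun k => shift_coef u (S k)) with u. simpl. ring. Qed.

Lemma peval_plus N u v t :
  peval N (fun k => u k + v k)%C t = (peval N u t + peval N v t)%C.
Proof. unfold peval. rewrite <- csum_plus. apply csum_ext. intros. ring. Qed.

Lemma peval_scal N x u t : peval N (fun k => x * u k)%C t = (x * peval N u t)%C.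
Proof. unfold peval. rewrite <- csum_scal. apply csum_ext. intros. ring. Qed.

Lemma peval_minus N u v t :
  peval N (fun k => u k - v k)%C t = (peval N u t - peval N v t)%C.
Proof.
  rewrite (peval_ext N (fun k => u k - v k)%C (fun k => u k + - (1) * v k)%C) by (intros; ring).
  rewrite peval_plus, peval_scal. ring.
Qed.

Lemma peval_eq_0 N u t : (forall k, (k < N)%nat -> u k = 0%C) -> peval N u t = 0%C.
Proof. intros H. apply csum_eq_0. intros k Hk. rewrite H by easy. ring. Qed.

Lemma peval_trunc n N u t : (n < N)%nat -> peval N (trunc n u) t = peval (S n) u t.
Proof.
  intros HN. induction HN as [|N HN IH].
  - apply peval_ext. intros k Hk. unfold trunc. now rewrite (proj2 (Nat.leb_le k n)) by lia.
  - unfold peval in *. rewrite <- IH. simpl csum at 1. unfold trunc at 2.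
    rewrite (proj2 (Nat.leb_gt N n)) by lia. ring.
Qed.

Lemma cauchy_prod_Sl u v k :
  cauchy_prod u v (S k) = (u 0%nat * v (S k) + cauchy_prod (fun r => u (S r)) v k)%C.
Proof. unfold cauchy_prod. now rewrite csum_Sl. Qed.

(** * Asymptotics as t -> 0 *)

Definition bigO (K : nat) (f : R -> C) : Prop :=
  exists M, forall t, Rabs t <= 1 -> Cmod (f t) <= M * Rabs t ^ K.

Definition littleo (K : nat) (f : R -> C) : Prop :=
  forall eps, 0 < eps -> exists delta, 0 < delta /\
    forall t, 0 < Rabs t < delta -> Cmod (f t) <= eps * Rabs t ^ K.

Lemma pow_bounds_le_1 x K : 0 <= x <= 1 -> 0 <= x ^ K <= 1.
Proof. intros Hx. split; [now apply pow_le|]. rewrite <- (pow1 K). now apply pow_incr. Qed.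

Lemma pow_le_pow_le_1 x K L : 0 <= x <= 1 -> (L <= K)%nat -> x ^ K <= x ^ L.
Proof.
  intros Hx HLK. replace K with (L + (K - L))%nat by lia. rewrite pow_add.
  pose proof (pow_bounds_le_1 x L Hx). pose proof (pow_bounds_le_1 x (K - L) Hx). nra.
Qed.

Lemma bigO_ext K f g : (forall t, f t = g t) -> bigO K f -> bigO K g.
Proof. intros E [M HM]. exists M. intros t Ht. rewrite <- E. auto. Qed.

Lemma bigO_plus K f g : bigO K f -> bigO K g -> bigO K (fun t => f t + g t)%C.
Proof.
  intros [M1 H1] [M2 H2]. exists (M1 + M2). intros t Ht.
  specialize (H1 t Ht). specialize (H2 t Ht). pose proof (Cmod_triangle (f t) (g t)). nra.
Qed.

Lemma bigO_opp K f : bigO K f -> bigO K (fun t => - f t)%C.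
Proof. intros [M HM]. exists M. intros t Ht. rewrite Cmod_opp. auto. Qed.

Lemma bigO_minus K f g : bigO K f -> bigO K g -> bigO K (fun t => f t - g t)%C.
Proof. intros. apply bigO_plus; [|apply bigO_opp]; easy. Qed.

Lemma bigO_mult K L f g : bigO K f -> bigO L g -> bigO (K + L) (fun t => f t * g t)%C.
Proof.
  intros [M1 H1] [M2 H2]. exists (M1 * M2). intros t Ht.
  specialize (H1 t Ht). specialize (H2 t Ht).
  rewrite Cmod_mult, pow_add.
  replace (M1 * M2 * (Rabs t ^ K * Rabs t ^ L))
    with ((M1 * Rabs t ^ K) * (M2 * Rabs t ^ L)) by ring.
  apply Rmult_le_compat; auto using Cmod_ge_0.
Qed.

Lemma bigO_le K L f : (L <= K)%nat -> bigO K f -> bigO L f.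
Proof.
  intros HLK [M HM]. exists (Rabs M). intros t Ht.
  pose proof (pow_le_pow_le_1 (Rabs t) K L (conj (Rabs_pos t) Ht) HLK).
  pose proof (pow_bounds_le_1 (Rabs t) K (conj (Rabs_pos t) Ht)).
  specialize (HM t Ht). pose proof (Rle_abs M). pose proof (Rabs_pos M). nra.
Qed.

Lemma bigO_const c : bigO 0 (fun _ => c).
Proof. exists (Cmod c). intros t _. simpl. lra. Qed.

Lemma bigO_zero K : bigO K (fun _ => 0%C).
Proof. exists 0. intros t _. rewrite Cmod_0. lra. Qed.

Lemma bigO_pow K : bigO K (fun t => RtoC (t ^ K)).
Proof. exists 1. intros t _. rewrite Cmod_R, <- RPow_abs. lra. Qed.

Lemma bigO_id : bigO 1 (fun t => RtoC t).
Proof. apply (bigO_ext 1 (fun t => RtoC (t ^ 1))); [intros; f_equal; ring | apply bigO_pow]. Qed.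

Lemma bigO_peval N u : bigO 0 (peval N u).
Proof.
  induction N as [|N IH].
  - apply (bigO_ext 0 (fun _ => 0%C)); [easy | apply bigO_zero].
  - apply (bigO_ext 0 (fun t => peval N u t + u N * RtoC (t ^ N))%C); [easy|].
    apply bigO_plus; [easy|]. apply (bigO_le (0 + N)); [lia|].
    apply bigO_mult; [apply bigO_const | apply bigO_pow].
Qed.

Lemma bigO_peval_tail N M u : (N <= M)%nat -> bigO N (fun t => peval M u t - peval N u t)%C.
Proof.
  intros HNM. induction HNM as [|M HNM IH].
  - apply (bigO_ext N (fun _ => 0%C)); [intros; ring|].
    apply bigO_zero.
  - apply (bigO_ext N (fun t => (peval M u t - peval N u t) + u M * RtoC (t ^ M))%C).
    { intros t. unfold peval. simpl. ring. }
    apply bigO_plus; [easy|]. apply (bigO_le (0 + M)); [lia|].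
    apply bigO_mult; [apply bigO_const | apply bigO_pow].
Qed.

Lemma bigO_peval_cauchy_prod N u v :
  bigO N (fun t => peval N u t * peval N v t - peval N (cauchy_prod u v) t)%C.
Proof.
  revert u v. induction N as [|N IH]; intros u v.
  - apply (bigO_ext 0 (fun _ => 0%C)); [intros; unfold peval; simpl; ring | apply bigO_zero].
  - set (u' := fun k => u (S k)).
    apply (bigO_ext (1 + N) (fun t => RtoC t *
      (peval N u' t * (peval (S N) v t - peval N v t)
       + (peval N u' t * peval N v t - peval N (cauchy_prod u' v) t)))%C).
    + intros t. rewrite (peval_Sl N u), (peval_Sl N (cauchy_prod u v)), (peval_Sl N v).
      rewrite (peval_ext N (fun k => cauchy_prod u v (S k))
        (fun k => u 0%nat * v (S k) + cauchy_prod u' v k)%C)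
        by (intros; apply cauchy_prod_Sl).
      assert (Hc0 : cauchy_prod u v 0 = (u 0%nat * v 0%nat)%C) by (unfold cauchy_prod; simpl; ring).
      rewrite peval_plus, peval_scal, Hc0. fold u'. ring.
    + apply bigO_mult; [apply bigO_id|].
      apply bigO_plus; [|apply IH].
      apply (bigO_mult 0 N); [apply bigO_peval | apply bigO_peval_tail; lia].
Qed.

Lemma bigO_peval_mult N M1 M2 u v : (N <= M1)%nat -> (N <= M2)%nat ->
  bigO N (fun t => peval M1 u t * peval M2 v t - peval N (cauchy_prod u v) t)%C.
Proof.
  intros H1 H2.
  apply (bigO_ext N (fun t => (peval M1 u t - peval N u t) * peval M2 v t
    + peval N u t * (peval M2 v t - peval N v t)
    + (peval N u t * peval N v t - peval N (cauchy_prod u v) t))%C); [intros; ring|].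
  apply bigO_plus; [apply bigO_plus|].
  - apply (bigO_le (N + 0)); [lia|].
    apply bigO_mult; [now apply bigO_peval_tail | apply bigO_peval].
  - apply (bigO_mult 0 N); [apply bigO_peval | now apply bigO_peval_tail].
  - apply bigO_peval_cauchy_prod.
Qed.

Lemma littleo_ext K f g : (forall t, f t = g t) -> littleo K f -> littleo K g.
Proof.
  intros E H eps Heps. destruct (H eps Heps) as [d [Hd Hf]].
  exists d. split; [easy|]. intros t Ht. rewrite <- E. auto.
Qed.

Lemma littleo_plus K f g : littleo K f -> littleo K g -> littleo K (fun t => f t + g t)%C.
Proof.
  intros H1 H2 eps Heps.
  destruct (H1 (eps / 2)) as [d1 [Hd1 Hf1]]; [lra|].
  destruct (H2 (eps / 2)) as [d2 [Hd2 Hf2]]; [lra|].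
  exists (Rmin d1 d2). split; [now apply Rmin_pos|]. intros t Ht.
  pose proof (Rmin_l d1 d2). pose proof (Rmin_r d1 d2).
  specialize (Hf1 t ltac:(lra)). specialize (Hf2 t ltac:(lra)).
  pose proof (Cmod_triangle (f t) (g t)). lra.
Qed.

Lemma littleo_minus K f g : littleo K f -> littleo K g -> littleo K (fun t => f t - g t)%C.
Proof.
  intros Hf Hg. apply littleo_plus; [easy|].
  intros eps Heps. destruct (Hg eps Heps) as [d [Hd H]].
  exists d. split; [easy|]. intros t Ht. rewrite Cmod_opp. auto.
Qed.

Lemma littleo_of_bigO K f : bigO (S K) f -> littleo K f.
Proof.
  intros [M HM] eps Heps. exists (Rmin 1 (eps / (Rabs M + 1))).
  pose proof (Rabs_pos M). assert (0 < eps / (Rabs M + 1)) by (apply Rdiv_lt_0_compat; lra).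
  split; [apply Rmin_pos; lra|]. intros t Ht.
  pose proof (Rmin_l 1 (eps / (Rabs M + 1))). pose proof (Rmin_r 1 (eps / (Rabs M + 1))).
  specialize (HM t ltac:(lra)). simpl in HM.
  pose proof (pow_bounds_le_1 (Rabs t) K ltac:(lra)). pose proof (Rle_abs M).
  assert (E : (Rabs M + 1) * (eps / (Rabs M + 1)) = eps) by (field; lra).
  assert (Rabs M * Rabs t <= eps) by nra.
  assert (M * Rabs t * Rabs t ^ K <= eps * Rabs t ^ K) by (apply Rmult_le_compat_r; nra).
  nra.
Qed.

Lemma littleo_le K L f : (L <= K)%nat -> littleo K f -> littleo L f.
Proof.
  intros HLK H eps Heps. destruct (H eps Heps) as [d [Hd Hf]].
  exists (Rmin d 1). split; [apply Rmin_pos; lra|]. intros t Ht.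
  pose proof (Rmin_l d 1). pose proof (Rmin_r d 1).
  pose proof (pow_le_pow_le_1 (Rabs t) K L ltac:(lra) HLK).
  specialize (Hf t ltac:(lra)). nra.
Qed.

Lemma littleo_const c : littleo 0 (fun _ => c) -> c = 0%C.
Proof.
  intros H. apply Cmod_eq_0. apply Rle_antisym; [|apply Cmod_ge_0].
  apply Rnot_lt_le. intros Hc. destruct (H (Cmod c / 2)) as [d [Hd Hf]]; [lra|].
  specialize (Hf (d / 2)). rewrite Rabs_pos_eq in Hf by lra. simpl in Hf.
  specialize (Hf ltac:(lra)). lra.
Qed.

Lemma littleo_limit K f c : littleo K f -> bigO 1 (fun t => f t - c)%C -> c = 0%C.
Proof.
  intros Hf Hc. apply littleo_const.
  apply (littleo_ext 0 (fun t => f t - (f t - c))%C); [intros; ring|].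
  apply littleo_minus; [apply (littleo_le K); [lia | easy] | now apply littleo_of_bigO].
Qed.

Lemma littleo_div_t K g : littleo (S K) (fun t => RtoC t * g t)%C -> littleo K g.
Proof.
  intros H eps Heps. destruct (H eps Heps) as [d [Hd Hf]].
  exists d. split; [easy|]. intros t Ht. specialize (Hf t Ht).
  rewrite Cmod_mult, Cmod_R in Hf. simpl in Hf.
  apply (Rmult_le_reg_l (Rabs t)); lra.
Qed.

Lemma littleo_mult K f g : littleo K f -> bigO 1 g -> littleo (S K) (fun t => f t * g t)%C.
Proof.
  intros Hf [M HM] eps Heps. pose proof (Rabs_pos M).
  destruct (Hf (eps / (Rabs M + 1))) as [d [Hd Hfd]]; [apply Rdiv_lt_0_compat; lra|].
  exists (Rmin d 1). split; [apply Rmin_pos; lra|]. intros t Ht.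
  pose proof (Rmin_l d 1). pose proof (Rmin_r d 1).
  specialize (Hfd t ltac:(lra)). specialize (HM t ltac:(lra)). simpl in HM |- *.
  rewrite Cmod_mult. pose proof (Rle_abs M). pose proof (Rabs_pos t).
  pose proof (pow_bounds_le_1 (Rabs t) K ltac:(lra)). 
  assert (Hfrac : eps / (Rabs M + 1) * Rabs M <= eps).
  { apply (Rmult_le_reg_l (Rabs M + 1)); [lra|]. unfold Rdiv.
    replace ((Rabs M + 1) * (eps * / (Rabs M + 1) * Rabs M)) with (eps * Rabs M) by (field; lra).
    nra. }
  assert (Cmod (f t) * Cmod (g t) <= (eps / (Rabs M + 1) * Rabs t ^ K) * (Rabs M * (Rabs t * 1)))
    by (apply Rmult_le_compat; [apply Cmod_ge_0 | apply Cmod_ge_0 | exact Hfd |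
        eapply Rle_trans; [exact HM | apply Rmult_le_compat_r; lra]]).
  assert (eps / (Rabs M + 1) * Rabs M * (Rabs t ^ K * Rabs t) <= eps * (Rabs t ^ K * Rabs t))
    by (apply Rmult_le_compat_r; nra).
  nra.
Qed.

Lemma littleo_div_bounded_below K (f Y : R -> C) s : 0 < s ->
  (exists d, 0 < d /\ forall t, Rabs t < d -> s <= Cmod (Y t)) ->
  littleo K (fun t => f t * Y t)%C -> littleo K f.
Proof.
  intros Hs [d0 [Hd0 HY]] H eps Heps.
  destruct (H (eps * s)) as [d [Hd Hf]]; [nra|].
  exists (Rmin d d0). split; [apply Rmin_pos; lra|]. intros t Ht.
  pose proof (Rmin_l d d0). pose proof (Rmin_r d d0).
  specialize (Hf t ltac:(lra)). specialize (HY t ltac:(lra)). rewrite Cmod_mult in Hf.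
  pose proof (Cmod_ge_0 (f t)). apply (Rmult_le_reg_r s); [easy|].
  assert (Cmod (f t) * s <= Cmod (f t) * Cmod (Y t)) by (apply Rmult_le_compat_l; lra).
  lra.
Qed.

Lemma Cmod_ge_half_near_limit (Y : R -> C) (y : C) : y <> 0%C -> bigO 1 (fun t => Y t - y)%C ->
  exists d, 0 < d /\ forall t, Rabs t < d -> Cmod y / 2 <= Cmod (Y t).
Proof.
  intros Hy [M HM]. apply Cmod_gt_0 in Hy. pose proof (Rabs_pos M).
  set (r := Cmod y / (2 * (Rabs M + 1))).
  assert (Hr : 0 < r) by (apply Rdiv_lt_0_compat; lra).
  assert (E : 2 * (Rabs M + 1) * r = Cmod y) by (unfold r; field; lra).
  exists (Rmin 1 r). split; [apply Rmin_pos; lra|]. intros t Ht.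
  pose proof (Rmin_l 1 r). pose proof (Rmin_r 1 r). pose proof (Rabs_pos t).
  specialize (HM t ltac:(lra)). simpl in HM. pose proof (Rle_abs M).
  assert (M * (Rabs t * 1) <= Rabs M * r) by nra.
  pose proof (Cmod_triangle (Y t) (- (Y t - y))). rewrite Cmod_opp in *.
  replace (Y t + - (Y t - y))%C with y in * by ring.
  nra.
Qed.

Lemma bigO_peval_sub_head N u : bigO 1 (fun t => peval (S N) u t - u 0%nat)%C.
Proof.
  apply (bigO_ext (1 + 0) (fun t => RtoC t * peval N (fun k => u (S k)) t)%C).
  - intros t. rewrite peval_Sl. ring.
  - apply bigO_mult; [apply bigO_id | apply bigO_peval].
Qed.

Lemma peval_littleo_coef_eq_0 K : forall N u, (K < N)%nat -> littleo K (peval N u) ->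
  forall k, (k <= K)%nat -> u k = 0%C.
Proof.
  induction K as [|K IH]; intros [|N] u HKN Hu k Hk; try lia;
    assert (u0 : u 0%nat = 0%C) by exact (littleo_limit _ _ _ Hu (bigO_peval_sub_head N u)).
  - now replace k with 0%nat by lia.
  - destruct k as [|k]; [easy|].
    apply (IH N (fun j => u (S j))); [lia| |lia].
    apply littleo_div_t. apply (littleo_ext (S K) (peval (S N) u)); [|easy].
    intros t. rewrite peval_Sl, u0. ring.
Qed.

(** * Second derivatives of a Taylor sum *)

Definition wsum (g : nat -> C -> R) (w : nat -> R) (n : nat) : C -> R :=
  fun p => sum_f_R0 (fun m => g m p * w m) n.

Definition hess_comb (p q r s : C) (g : C -> R) (z : C) : C :=
  (p * RtoC (px (px g) z) + q * RtoC (px (py g) z)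
   + r * RtoC (py (px g) z) + s * RtoC (py (py g) z))%C.

Lemma Dw_toC (g : C -> R) p : Dw (toC g) p = (/ 2 * px g p, - / 2 * py g p).
Proof.
  unfold Dw, cx, cy, toC, px, py. simpl. rewrite !Derive_const.
  apply injective_projections; simpl; field.
Qed.

Lemma Dwb_toC (g : C -> R) p : Dwb (toC g) p = (/ 2 * px g p, / 2 * py g p).
Proof.
  unfold Dwb, cx, cy, toC, px, py. simpl. rewrite !Derive_const.
  apply injective_projections; simpl; field.
Qed.

Lemma cx_scaled (h : C -> C) (u v : C -> R) (a b : R) z :
  (forall p, h p = (a * u p, b * v p)) -> cx h z = (a * px u z, b * px v z).
Proof.
  intros H. unfold cx.
  rewrite (Derive_ext (fun s => fst (h (s, snd z))) (fun s => a * u (s, snd z))),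
    (Derive_ext (fun s => snd (h (s, snd z))) (fun s => b * v (s, snd z)))
    by (intros; now rewrite H).
  now rewrite !Derive_scal.
Qed.

Lemma cy_scaled (h : C -> C) (u v : C -> R) (a b : R) z :
  (forall p, h p = (a * u p, b * v p)) -> cy h z = (a * py u z, b * py v z).
Proof.
  intros H. unfold cy.
  rewrite (Derive_ext (fun s => fst (h (fst z, s))) (fun s => a * u (fst z, s))),
    (Derive_ext (fun s => snd (h (fst z, s))) (fun s => b * v (fst z, s)))
    by (intros; now rewrite H).
  now rewrite !Derive_scal.
Qed.

Lemma f_ww_hess g z : f_ww g z = hess_comb (/ 4) (- Ci / 4) (- Ci / 4) (- / 4) g z.
Proof.
  unfold f_ww, Dw at 1, hess_comb.
  rewrite (cx_scaled _ (px g) (py g) (/ 2) (- / 2)), (cy_scaled _ (px g) (py g) (/ 2) (- / 2))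
    by apply Dw_toC.
  apply injective_projections; simpl; field.
Qed.

Lemma f_wbwb_hess g z : f_wbwb g z = hess_comb (/ 4) (Ci / 4) (Ci / 4) (- / 4) g z.
Proof.
  unfold f_wbwb, Dwb at 1, hess_comb.
  rewrite (cx_scaled _ (px g) (py g) (/ 2) (/ 2)), (cy_scaled _ (px g) (py g) (/ 2) (/ 2))
    by apply Dwb_toC.
  apply injective_projections; simpl; field.
Qed.

Lemma f_wwb_hess g z : f_wwb g z = hess_comb (/ 4) (- Ci / 4) (Ci / 4) (/ 4) g z.
Proof.
  unfold f_wwb, Dwb at 1, hess_comb.
  rewrite (cx_scaled _ (px g) (py g) (/ 2) (- / 2)), (cy_scaled _ (px g) (py g) (/ 2) (- / 2))
    by apply Dw_toC.
  apply injective_projections; simpl; field.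
Qed.

Lemma f_ww_mul_f_wbwb g z : (f_ww g z * f_wbwb g z)%C = RtoC (Cmod (f_ww g z) ^ 2).
Proof.
  rewrite Cmod2_conj. f_equal. rewrite f_ww_hess, f_wbwb_hess. unfold hess_comb.
  apply injective_projections; simpl; field.
Qed.

Lemma Derive_wsum (h : nat -> R -> R) (w : nat -> R) n x :
  (forall m, (m <= n)%nat -> ex_derive (h m) x) ->
  Derive (fun s => sum_f_R0 (fun m => h m s * w m) n) x
  = sum_f_R0 (fun m => Derive (h m) x * w m) n.
Proof.
  intros H. rewrite <- sum_n_Reals.
  rewrite (Derive_ext _ (fun s => sum_n (fun m => h m s * w m) n))
    by (intros; now rewrite sum_n_Reals).
  rewrite Derive_sum_n.
  - apply sum_n_ext. intros m. apply Derive_scal_l.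
  - intros m Hm. apply ex_derive_mult; [now apply H | apply ex_derive_const].
Qed.

Lemma px_wsum_on U n g w (G : C -> R) z : open U -> U z ->
  (forall m, (m <= n)%nat -> C1_on U (g m)) -> (forall p, U p -> G p = wsum g w n p) ->
  px G z = wsum (fun m => px (g m)) w n z.
Proof.
  intros HU Hz Hg HG. unfold px at 1.
  rewrite (Derive_ext_loc _ (fun s => wsum g w n (s, snd z))).
  - apply Derive_wsum. intros m Hm. apply (Hg m Hm z Hz).
  - destruct (HU z Hz) as [e He]. exists e. intros s Hs.
    apply HG, He. split; [exact Hs | apply ball_center].
Qed.

Lemma py_wsum_on U n g w (G : C -> R) z : open U -> U z ->
  (forall m, (m <= n)%nat -> C1_on U (g m)) -> (forall p, U p -> G p = wsum g w n p) ->
  py G z = wsum (fun m => py (g m)) w n z.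
Proof.
  intros HU Hz Hg HG. unfold py at 1.
  rewrite (Derive_ext_loc _ (fun s => wsum g w n (fst z, s))).
  - apply Derive_wsum. intros m Hm. apply (Hg m Hm z Hz).
  - destruct (HU z Hz) as [e He]. exists e. intros s Hs.
    apply HG, He. split; [apply ball_center | exact Hs].
Qed.

Lemma RtoC_sum_f_R0 (a : nat -> R) n : RtoC (sum_f_R0 a n) = csum (S n) (fun k => RtoC (a k)).
Proof. induction n as [|n IH]; simpl in *; [ring|]. rewrite <- IH, RtoC_plus. ring. Qed.

Lemma hess_comb_wsum U n g w p q r s z : open U -> U z ->
  (forall m, (m <= n)%nat -> C2_on U (g m)) ->
  hess_comb p q r s (wsum g w n) z = csum (S n) (fun m => hess_comb p q r s (g m) z * RtoC (w m))%C.
Proof.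
  intros HU Hz Hg.
  assert (Hg0 : forall m, (m <= n)%nat -> C1_on U (g m)) by (intros m Hm; apply (Hg m Hm)).
  assert (Hgx : forall m, (m <= n)%nat -> C1_on U (px (g m))) by (intros m Hm; apply (Hg m Hm)).
  assert (Hgy : forall m, (m <= n)%nat -> C1_on U (py (g m))) by (intros m Hm; apply (Hg m Hm)).
  assert (Hx : forall p, U p -> px (wsum g w n) p = wsum (fun m => px (g m)) w n p)
    by (intros; now apply (px_wsum_on U)).
  assert (Hy : forall p, U p -> py (wsum g w n) p = wsum (fun m => py (g m)) w n p)
    by (intros; now apply (py_wsum_on U)).
  unfold hess_comb.
  rewrite (px_wsum_on U n (fun m => px (g m)) w _ z HU Hz Hgx Hx),
    (px_wsum_on U n (fun m => py (g m)) w _ z HU Hz Hgy Hy),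
    (py_wsum_on U n (fun m => px (g m)) w _ z HU Hz Hgx Hx),
    (py_wsum_on U n (fun m => py (g m)) w _ z HU Hz Hgy Hy).
  unfold wsum. rewrite !RtoC_sum_f_R0, <- !csum_scal, <- !csum_plus.
  apply csum_ext. intros m _. rewrite !RtoC_mult. ring.
Qed.

Lemma px_ext (f g : C -> R) : (forall p, f p = g p) -> forall p, px f p = px g p.
Proof. intros H p. apply Derive_ext. intros. apply H. Qed.

Lemma py_ext (f g : C -> R) : (forall p, f p = g p) -> forall p, py f p = py g p.
Proof. intros H p. apply Derive_ext. intros. apply H. Qed.

Lemma hess_comb_ext p q r s (f g : C -> R) z :
  (forall p, f p = g p) -> hess_comb p q r s f z = hess_comb p q r s g z.
Proof.
  intros H. unfold hess_comb.
  rewrite (px_ext (px f) (px g)), (px_ext (py f) (py g)), (py_ext (px f) (px g)),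
    (py_ext (py f) (py g)); auto using px_ext, py_ext.
Qed.

Definition ifact (k : nat) : C := RtoC (/ INR (fact k)).

Lemma ifact_0 : ifact 0 = RtoC 1.
Proof. unfold ifact. simpl. now rewrite Rinv_1. Qed.

Lemma ifact_1 : ifact 1 = RtoC 1.
Proof. unfold ifact. simpl. replace (1 * 1) with 1 by ring. now rewrite Rinv_1. Qed.

Lemma hess_comb_ftaylor U n fm t p q r s z : open U -> U z ->
  (forall m, (m <= n)%nat -> C2_on U (fm m)) ->
  hess_comb p q r s (ftaylor fm n t) z
  = peval (S n) (fun m => hess_comb p q r s (fm m) z * ifact m)%C t.
Proof.
  intros HU Hz Hfm.
  rewrite (hess_comb_ext _ _ _ _ _ (wsum fm (fun m => t ^ m / INR (fact m)) n))
    by (intros; apply sum_eq; intros; unfold Rdiv; ring).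
  rewrite (hess_comb_wsum U) by easy.
  apply csum_ext. intros m _. unfold ifact. rewrite <- Cmult_assoc, <- RtoC_mult.
  do 2 f_equal. field.
  apply INR_fact_neq_0.
Qed.

Lemma wirtinger_ftaylor (D : (C -> R) -> C -> C) p q r s :
  (forall g z, D g z = hess_comb p q r s g z) ->
  forall U n fm t z, open U -> U z -> (forall m, (m <= n)%nat -> C2_on U (fm m)) ->
  D (ftaylor fm n t) z = peval (S n) (fun m => D (fm m) z * ifact m)%C t.
Proof.
  intros HD U n fm t z HU Hz Hfm. rewrite HD, (hess_comb_ftaylor U) by easy.
  apply peval_ext. intros k _. now rewrite HD.
Qed.

(** * Jordan domains are open *)

Definition ramp (x : R) : R := (x + Rabs x) / 2.

Lemma ramp_nonneg x : 0 <= x -> ramp x = x.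
Proof. intros H. unfold ramp. rewrite Rabs_pos_eq by easy. field. Qed.

Lemma ramp_nonpos x : x <= 0 -> ramp x = 0.
Proof. intros H. unfold ramp. rewrite Rabs_left1 by easy. field. Qed.

Lemma continuous_pair (f g : R -> R) s : continuous f s -> continuous g s ->
  @continuous R_UniformSpace C_UniformSpace (fun x => (f x, g x)) s.
Proof.
  intros Hf Hg. apply (continuous_comp_2 f g (fun a b => (a, b))); auto.
  intros P [e He]. exists e. intros [a b] Hab. now apply He.
Qed.

Lemma continuous_fst_C (w : C) : continuous (fst : C -> R) w.
Proof. destruct w. apply continuous_fst. Qed.

Lemma continuous_snd_C (w : C) : continuous (snd : C -> R) w.
Proof. destruct w. apply continuous_snd. Qed.

Lemma continuous_concat_component (p : R -> C) (proj : C -> R) c s :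
  (forall s, continuous p s) -> (forall w, continuous proj w) ->
  continuous (fun s => proj (p (ramp (2 * s - 1))) + ramp (1 - 2 * s) * c) s.
Proof.
  intros Hp Hproj. apply (continuous_plus (V := R_NormedModule)).
  - apply (continuous_comp (fun s => p (ramp (2 * s - 1))) proj); [|apply Hproj].
    apply (continuous_comp (fun s => ramp (2 * s - 1)) p); [|apply Hp].
    apply continuity_pt_filterlim. unfold ramp. reg.
  - apply continuity_pt_filterlim. unfold ramp. reg.
Qed.

Lemma joinable_off_segment gamma (z w z' : C) :
  (forall l, 0 <= l <= 1 ->
     ~ on_curve gamma (fst z + l * (fst w - fst z), snd z + l * (snd w - snd z))) ->
  joinable_off gamma w z' -> joinable_off gamma z z'.
Proof.
  intros Hseg [p [Hp [Hp0 [Hp1 Hpoff]]]].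
  (* On [0, 1/2] only the [ramp (1 - 2 s)] term moves (the segment from [z] to [w]);
     on [1/2, 1] only [ramp (2 s - 1)] does (the path [p]). *)
  exists (fun s => (fst (p (ramp (2 * s - 1))) + ramp (1 - 2 * s) * (fst z - fst w),
                    snd (p (ramp (2 * s - 1))) + ramp (1 - 2 * s) * (snd z - snd w))).
  split; [|split; [|split]].
  - intros s. apply continuous_pair; apply continuous_concat_component;
      auto using continuous_fst_C, continuous_snd_C.
  - rewrite (ramp_nonpos (2 * 0 - 1)), (ramp_nonneg (1 - 2 * 0)), Hp0 by lra.
    apply injective_projections; simpl; ring.
  - rewrite (ramp_nonpos (1 - 2 * 1)), (ramp_nonneg (2 * 1 - 1)), !Rmult_0_l, !Rplus_0_r by lra.
    replace (2 * 1 - 1) with 1 by ring. now rewrite Hp1, <- surjective_pairing.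
  - intros s Hs. destruct (Rle_lt_dec s (1 / 2)).
    + rewrite (ramp_nonpos (2 * s - 1)), (ramp_nonneg (1 - 2 * s)), Hp0 by lra.
      replace (fst w + (1 - 2 * s) * (fst z - fst w))
        with (fst z + 2 * s * (fst w - fst z)) by ring.
      replace (snd w + (1 - 2 * s) * (snd z - snd w))
        with (snd z + 2 * s * (snd w - snd z)) by ring.
      apply Hseg. lra.
    + rewrite (ramp_nonpos (1 - 2 * s)), !Rmult_0_l, !Rplus_0_r by lra.
      rewrite <- surjective_pairing. apply Hpoff. rewrite ramp_nonneg; lra.
Qed.

Lemma off_curve_nbhd gamma (z : C) : (forall s, continuous gamma s) -> ~ on_curve gamma z ->
  exists r, 0 < r /\ forall w : C,
    (fst w - fst z) ^ 2 + (snd w - snd z) ^ 2 < r -> ~ on_curve gamma w.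
Proof.
  intros Hc Hz.
  set (d2 := fun s => (fst (gamma s) - fst z) ^ 2 + (snd (gamma s) - snd z) ^ 2).
  assert (Hd2 : forall s, continuous d2 s).
  { intros s. unfold d2.
    apply (continuous_plus (V := R_NormedModule)).
    - apply (continuous_comp (fun s => fst (gamma s)) (fun x => (x - fst z) ^ 2)).
      + apply (continuous_comp gamma); auto using continuous_fst_C.
      + apply continuity_pt_filterlim. reg.
    - apply (continuous_comp (fun s => snd (gamma s)) (fun x => (x - snd z) ^ 2)).
      + apply (continuous_comp gamma); auto using continuous_snd_C.
      + apply continuity_pt_filterlim. reg. }
  destruct (continuity_ab_min d2 0 1 ltac:(lra)
    (fun s _ => proj2 (continuity_pt_filterlim d2 s) (Hd2 s))) as [s0 [Hmin Hs0]].
  exists (d2 s0). split.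
  - apply Rnot_le_lt. intros Hle. apply Hz. exists s0. split; [easy|].
    unfold d2 in Hle.
    pose proof (pow2_ge_0 (fst (gamma s0) - fst z)).
    pose proof (pow2_ge_0 (snd (gamma s0) - snd z)).
    apply injective_projections; apply Rminus_diag_uniq, Rsqr_0_uniq; unfold Rsqr; nra.
  - intros w Hw [s [Hs E]]. specialize (Hmin s Hs). unfold d2 in Hmin, Hw. rewrite E in Hmin. lra.
Qed.

Lemma jordan_domain_open U : jordan_domain U -> open U.
Proof.
  intros [gamma [[Hc _] HU]] z Hz. apply HU in Hz as [Hoff [M HM]].
  destruct (off_curve_nbhd gamma z Hc Hoff) as [r [Hr Hnear]].
  assert (Hsr : 0 < sqrt r / 2) by (apply Rdiv_lt_0_compat; [now apply sqrt_lt_R0 | lra]).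
  exists (mkposreal _ Hsr). intros w [Hwx Hwy]. simpl in Hwx, Hwy.
  change (Rabs (fst w - fst z) < sqrt r / 2) in Hwx.
  change (Rabs (snd w - snd z) < sqrt r / 2) in Hwy.
  assert (Hd : (fst w - fst z) ^ 2 + (snd w - snd z) ^ 2 < r).
  { pose proof (sqrt_sqrt r ltac:(lra)). pose proof (sqrt_pos r).
    rewrite <- (pow2_abs (fst w - fst z)), <- (pow2_abs (snd w - snd z)).
    pose proof (Rabs_pos (fst w - fst z)). pose proof (Rabs_pos (snd w - snd z)). nra. }
  apply HU. split; [now apply Hnear|].
  exists M. intros z' Hz'. apply HM. apply (joinable_off_segment gamma z w z'); [|easy].
  intros l Hl. apply Hnear. simpl.
  replace (fst z + l * (fst w - fst z) - fst z) with (l * (fst w - fst z)) by ring.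
  replace (snd z + l * (snd w - snd z) - snd z) with (l * (snd w - snd z)) by ring.
  pose proof (pow2_ge_0 (fst w - fst z)). pose proof (pow2_ge_0 (snd w - snd z)).
  assert (l ^ 2 <= 1) by nra. nra.
Qed.

(** * The coefficient recursion *)

Lemma C_real (w : C) : Im w = 0 -> w = RtoC (Re w).
Proof. destruct w as [x y]. simpl. now intros ->. Qed.

Lemma sqrt_lipschitz q p : 0 <= q -> 0 < p -> Rabs (sqrt q - sqrt p) <= Rabs (q - p) / sqrt p.
Proof.
  intros Hq Hp. pose proof (sqrt_lt_R0 p Hp). pose proof (sqrt_pos q).
  replace (q - p) with ((sqrt q - sqrt p) * (sqrt q + sqrt p))
    by (pose proof (sqrt_sqrt q Hq); pose proof (sqrt_sqrt p ltac:(lra)); lra).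
  rewrite Rabs_mult, (Rabs_pos_eq (sqrt q + sqrt p)) by lra.
  apply (Rmult_le_reg_r (sqrt p)); [easy|]. unfold Rdiv. rewrite Rmult_assoc, Rinv_l by lra.
  pose proof (Rabs_pos (sqrt q - sqrt p)). nra.
Qed.

Lemma cauchy_prod_self_split (u : nat -> C) m : u 0%nat = 0%C -> (2 <= m)%nat ->
  cauchy_prod u u (S m)
  = (RtoC 2 * (u 1%nat * u m) + csum_range 2 m (fun r => u r * u (S m - r)%nat))%C.
Proof.
  intros Hu0 Hm. destruct m as [|[|p]]; [lia|lia|].
  unfold cauchy_prod, csum_range. set (T := fun r => (u r * u (S (S (S p)) - r)%nat)%C).
  change (csum (S (S (S (S p)))) T) with (csum (S (S p)) T + T (S (S p)) + T (S (S (S p))))%C.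
  rewrite !csum_Sl. replace (S (S p) - 2)%nat with p by lia.
  unfold T. rewrite Nat.sub_diag, !Nat.sub_0_r, Hu0.
  replace (S (S (S p)) - S (S p))%nat with 1%nat by lia.
  replace (S (S (S p)) - 1)%nat with (S (S p)) by lia.
  simpl. ring.
Qed.

Lemma fact_div_binom_pred m r : (1 <= m)%nat -> (r <= m - 1)%nat ->
  INR (fact m) * / INR (fact r) * / INR (fact (m - 1 - r)) = INR m * binom (m - 1) r.
Proof.
  intros Hm Hr. destruct m as [|m]; [lia|]. replace (S m - 1)%nat with m in * by lia.
  unfold binom, Binomial.C. rewrite fact_simpl, mult_INR.
  pose proof (INR_fact_neq_0 m). pose proof (INR_fact_neq_0 r). pose proof (INR_fact_neq_0 (m - r)).
  field. auto.
Qed.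

Lemma fact_div_binom_succ m r : (r <= m + 1)%nat ->
  INR (fact m) * / INR (fact r) * / INR (fact (m + 1 - r)) = / INR (m + 1) * binom (m + 1) r.
Proof.
  intros Hr. unfold binom, Binomial.C. replace (m + 1)%nat with (S m) by lia.
  rewrite fact_simpl, mult_INR.
  pose proof (INR_fact_neq_0 m). pose proof (INR_fact_neq_0 r).
  pose proof (INR_fact_neq_0 (S m - r)).
  assert (INR (S m) <> 0) by (rewrite S_INR; pose proof (pos_INR m); lra).
  field. auto.
Qed.

Section Coefficients.

Variable n : nat.
Variables a b c : nat -> C.
Variables A B F : R -> C.
Hypothesis HA : forall t, A t = peval (S n) (fun k => a k * ifact k)%C t.
Hypothesis HB : forall t, B t = peval (S n) (fun k => b k * ifact k)%C t.
Hypothesis HF : forall t, F t = peval (S n) (fun k => c k * ifact k)%C t.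
Hypothesis HAB : forall t, Im (A t * B t) = 0 /\ 0 <= Re (A t * B t).
Hypothesis Hab0 : Im (a 0%nat * b 0%nat) = 0 /\ 0 < Re (a 0%nat * b 0%nat).

Definition coefA k := (a k * ifact k)%C.
Definition coefB k := (b k * ifact k)%C.
Definition coefF := trunc n (fun k => c k * ifact k)%C.
Definition re_AB t := Re (A t * B t).
Definition re_ab0 := Re (a 0%nat * b 0%nat).
Definition G t := RtoC (t * sqrt (re_AB t)).

(* Coefficients of [F^2 - t^2 A B], which is [(F - G) (F + G)]. *)
Definition defect k :=
  (cauchy_prod coefF coefF k - shift_coef (shift_coef (cauchy_prod coefA coefB)) k)%C.

Lemma coefF_le k : (k <= n)%nat -> coefF k = (c k * ifact k)%C.
Proof. intros Hk. unfold coefF, trunc. now rewrite (proj2 (Nat.leb_le k n)). Qed.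

Lemma coefF_0 : coefF 0%nat = c 0%nat.
Proof. rewrite coefF_le, ifact_0 by lia. ring. Qed.

Lemma F_peval N t : (n < N)%nat -> F t = peval N coefF t.
Proof. intros HN. unfold coefF. now rewrite peval_trunc, HF. Qed.

Lemma AB_real t : (A t * B t)%C = RtoC (re_AB t).
Proof. apply C_real, HAB. Qed.

Lemma sqrt_re_ab0_pos : 0 < sqrt re_ab0.
Proof. apply sqrt_lt_R0, Hab0. Qed.

Lemma bigO_AB_sub : bigO 1 (fun t => A t * B t - a 0%nat * b 0%nat)%C.
Proof.
  assert (Ea : coefA 0%nat = a 0%nat) by (unfold coefA; rewrite ifact_0; ring).
  assert (Eb : coefB 0%nat = b 0%nat) by (unfold coefB; rewrite ifact_0; ring).
  apply (bigO_ext (1 + 0) (fun t => (peval (S n) coefA t - coefA 0%nat) * peval (S n) coefB t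
      + coefA 0%nat * (peval (S n) coefB t - coefB 0%nat))%C).
  { intros t. rewrite HA, HB, Ea, Eb. fold coefA coefB. ring. }
  apply bigO_plus.
  - apply bigO_mult; [apply bigO_peval_sub_head | apply bigO_peval].
  - apply (bigO_mult 0 1); [apply bigO_const | apply bigO_peval_sub_head].
Qed.

Lemma bigO_sqrt_re_AB_sub : bigO 1 (fun t => RtoC (sqrt (re_AB t)) - RtoC (sqrt re_ab0))%C.
Proof.
  destruct bigO_AB_sub as [M HM]. exists (M / sqrt re_ab0). intros t Ht.
  pose proof sqrt_re_ab0_pos. specialize (HM t Ht).
  rewrite <- RtoC_minus, Cmod_R. eapply Rle_trans; [apply sqrt_lipschitz; apply HAB || apply Hab0|].
  unfold Rdiv. rewrite Rmult_assoc, (Rmult_comm (/ _)), <- Rmult_assoc.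
  apply Rmult_le_compat_r; [now apply Rlt_le, Rinv_0_lt_compat|].
  eapply Rle_trans; [|apply HM]. rewrite <- (Cmod_R (re_AB t - re_ab0)).
  unfold re_AB, re_ab0. rewrite RtoC_minus, <- !C_real by (apply HAB || apply Hab0). lra.
Qed.

Lemma bigO_sqrt_re_AB : bigO 0 (fun t => RtoC (sqrt (re_AB t))).
Proof.
  apply (bigO_ext 0 (fun t => (RtoC (sqrt (re_AB t)) - RtoC (sqrt re_ab0)) + RtoC (sqrt re_ab0))%C);
    [intros; ring|].
  apply bigO_plus; [apply (bigO_le 1), bigO_sqrt_re_AB_sub; lia | apply bigO_const].
Qed.

Lemma F_sub_G t : coefF 0%nat = 0%C ->
  (F t - G t)%C = (RtoC t * (peval n (fun k => coefF (S k)) t - RtoC (sqrt (re_AB t))))%C.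
Proof.
  intros H0. rewrite (F_peval (S n)), peval_Sl, H0 by lia. unfold G. rewrite RtoC_mult. ring.
Qed.

Lemma F_add_G t : coefF 0%nat = 0%C ->
  (F t + G t)%C = (RtoC t * (peval n (fun k => coefF (S k)) t + RtoC (sqrt (re_AB t))))%C.
Proof.
  intros H0. rewrite (F_peval (S n)), peval_Sl, H0 by lia. unfold G. rewrite RtoC_mult. ring.
Qed.

Lemma bigO_defect :
  bigO (S (S n)) (fun t => (F t - G t) * (F t + G t) - peval (S (S n)) defect t)%C.
Proof.
  apply (bigO_ext (S (S n)) (fun t =>
    (peval (S (S n)) coefF t * peval (S (S n)) coefF t
     - peval (S (S n)) (cauchy_prod coefF coefF) t)
    - RtoC t * RtoC t * (peval (S n) coefA t * peval (S n) coefB t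
                         - peval n (cauchy_prod coefA coefB) t))%C).
  - intros t. unfold defect. rewrite peval_minus, !peval_shift, <- (F_peval (S (S n))) by lia.
    rewrite <- HA, <- HB, AB_real. unfold G.
    replace (RtoC (re_AB t)) with (RtoC (sqrt (re_AB t)) * RtoC (sqrt (re_AB t)))%C
      by (rewrite <- RtoC_mult, sqrt_sqrt; [easy | apply HAB]).
    rewrite RtoC_mult. ring.
  - apply bigO_minus; [apply bigO_peval_mult; lia|].
    apply (bigO_mult 2 n); [|apply bigO_peval_mult; lia].
    apply (bigO_mult 1 1); apply bigO_id.
Qed.

Definition conv_ab m :=
  csum_range 0 m (fun r => RtoC (binom (m - 1) r) * a r * b (m - r - 1)%nat)%C.
Definition conv_cc m :=
  csum_range 2 m (fun r => RtoC (binom (m + 1) r) * c r * c (m - r + 1)%nat)%C.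

Definition coef_formula m : Prop :=
  c m = ((RtoC (INR m) * conv_ab m - RtoC (/ INR (m + 1)) * conv_cc m)
         / RtoC (2 ^ (1 - kdelta m 1)%nat * sqrt (Re (a 0%nat * b 0%nat))))%C.

Lemma coef_formula_0 : coef_formula 0 <-> c 0%nat = 0%C.
Proof.
  unfold coef_formula, conv_ab, conv_cc, csum_range. simpl.
  match goal with |- _ = ?R <-> _ => replace R with (RtoC 0) by (unfold Cdiv; ring) end. tauto.
Qed.

Lemma coef_formula_1 : coef_formula 1 <-> c 1%nat = RtoC (sqrt re_ab0).
Proof.
  pose proof sqrt_re_ab0_pos. pose proof (proj2 Hab0).
  unfold coef_formula, conv_ab, conv_cc, csum_range. simpl.
  change (fst (a 0%nat) * fst (b 0%nat) - snd (a 0%nat) * snd (b 0%nat)) with re_ab0.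
  rewrite C_n_0.
  match goal with
  | |- _ = ?R <-> _ => replace R with ((a 0%nat * b 0%nat) / RtoC (sqrt re_ab0))%C
  end.
  - rewrite (C_real (a 0%nat * b 0%nat)), <- RtoC_div by (apply Hab0 || lra). fold re_ab0.
    replace (re_ab0 / sqrt re_ab0) with (sqrt re_ab0); [tauto|].
    rewrite <- (sqrt_sqrt re_ab0) at 2 by (apply Rlt_le, Hab0). field. lra.
  - rewrite Rmult_1_l. unfold Cdiv. ring.
Qed.

Lemma defect_succ_factorial m : (2 <= m <= n)%nat -> c 0%nat = 0%C ->
  (RtoC (INR (fact m)) * defect (S m))%C
  = (RtoC 2 * (c 1%nat * c m) + RtoC (/ INR (m + 1)) * conv_cc m - RtoC (INR m) * conv_ab m)%C.
Proof.
  intros Hm Hc0. destruct m as [|m']; [lia|].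
  assert (HF0 : coefF 0%nat = 0%C) by now rewrite coefF_0.
  unfold defect. simpl (shift_coef (shift_coef (cauchy_prod coefA coefB)) (S (S m'))).
  set (m := S m'). rewrite (cauchy_prod_self_split coefF m HF0) by lia.
  assert (E1 : (RtoC (INR (fact m)) * (coefF 1%nat * coefF m))%C = (c 1%nat * c m)%C).
  { rewrite !coefF_le, ifact_1 by lia. unfold ifact.
    transitivity (c 1%nat * c m * RtoC (INR (fact m) * / INR (fact m)))%C;
      [rewrite !RtoC_mult; ring | rewrite Rinv_r by apply INR_fact_neq_0; ring]. }
  assert (E2 : (RtoC (INR (fact m)) * csum_range 2 m (fun r => coefF r * coefF (S m - r)%nat))%C
               = (RtoC (/ INR (m + 1)) * conv_cc m)%C).
  { unfold conv_cc, csum_range. rewrite <- !csum_scal. apply csum_ext. intros j Hj.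
    rewrite !coefF_le by lia. unfold ifact.
    replace (m - (2 + j) + 1)%nat with (S m - (2 + j))%nat by lia.
    transitivity (RtoC (INR (fact m) * / INR (fact (2 + j)) * / INR (fact (m + 1 - (2 + j))))
                  * (c (2 + j)%nat * c (S m - (2 + j))%nat))%C.
    - replace (m + 1 - (2 + j))%nat with (S m - (2 + j))%nat by lia. rewrite !RtoC_mult. ring.
    - rewrite fact_div_binom_succ, !RtoC_mult by lia. ring. }
  assert (E3 : (RtoC (INR (fact m)) * cauchy_prod coefA coefB m')%C = (RtoC (INR m) * conv_ab m)%C).
  { unfold conv_ab, cauchy_prod, csum_range. replace (m - 0)%nat with (S m') by lia.
    rewrite <- !csum_scal. apply csum_ext. intros r Hr.
    unfold coefA, coefB, ifact. simpl (0 + r)%nat.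
    replace (m - r - 1)%nat with (m' - r)%nat by lia.
    transitivity (RtoC (INR (fact m) * / INR (fact r) * / INR (fact (m - 1 - r)))
                  * (a r * b (m' - r)%nat))%C.
    - replace (m - 1 - r)%nat with (m' - r)%nat by lia. rewrite !RtoC_mult. ring.
    - rewrite fact_div_binom_pred, !RtoC_mult by lia. ring. }
  rewrite <- E1, <- E2, <- E3. ring.
Qed.

Lemma coef_formula_iff_defect m : (2 <= m <= n)%nat -> c 0%nat = 0%C ->
  c 1%nat = RtoC (sqrt re_ab0) -> (coef_formula m <-> defect (S m) = 0%C).
Proof.
  intros Hm Hc0 Hc1. pose proof sqrt_re_ab0_pos.
  assert (Hk : kdelta m 1 = 0%nat) by (unfold kdelta; now rewrite (proj2 (Nat.eqb_neq m 1)) by lia).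
  assert (Hs : RtoC (sqrt re_ab0) <> 0%C) by (intros E; apply RtoC_inj in E; lra).
  assert (H2 : RtoC 2 <> 0%C) by (intros E; apply RtoC_inj in E; lra).
  assert (Hf : RtoC (INR (fact m)) <> 0%C)
    by (intros E; apply RtoC_inj in E; now apply (INR_fact_neq_0 m)).
  pose proof (defect_succ_factorial m Hm Hc0) as K. rewrite Hc1 in K.
  unfold coef_formula. rewrite Hk. fold re_ab0.
  replace (2 ^ (1 - 0) * sqrt re_ab0) with (2 * sqrt re_ab0) by (simpl; ring).
  rewrite RtoC_mult. split; intros Hc.
  - replace (defect (S m)) with (/ RtoC (INR (fact m)) * (RtoC (INR (fact m)) * defect (S m)))%C
      by (field; easy).
    rewrite K, Hc. field. auto.
  - rewrite Hc in K.
    replace (c m) with ((RtoC 2 * (RtoC (sqrt re_ab0) * c m)) / (RtoC 2 * RtoC (sqrt re_ab0)))%C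
      by (field; auto).
    replace (RtoC 2 * (RtoC (sqrt re_ab0) * c m))%C
      with (RtoC (INR m) * conv_ab m - RtoC (/ INR (m + 1)) * conv_cc m)%C; [easy|].
    rewrite Cmult_0_r in K.
    transitivity (RtoC 2 * (RtoC (sqrt re_ab0) * c m) - (RtoC 2 * (RtoC (sqrt re_ab0) * c m)
      + RtoC (/ INR (m + 1)) * conv_cc m - RtoC (INR m) * conv_ab m))%C; [ring|].
    rewrite <- K. ring.
Qed.

Lemma bigO_G : bigO 1 G.
Proof.
  apply (bigO_ext (1 + 0) (fun t => RtoC t * RtoC (sqrt (re_AB t)))%C);
    [intros; unfold G; now rewrite RtoC_mult|].
  apply bigO_mult; [apply bigO_id | apply bigO_sqrt_re_AB].
Qed.

Lemma bigO_coefF_tail_sub : (1 <= n)%nat ->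
  bigO 1 (fun t => peval n (fun k => coefF (S k)) t - coefF 1%nat)%C.
Proof. intros Hn. replace n with (S (pred n)) by lia. apply bigO_peval_sub_head. Qed.

Lemma coefF_0_of_littleo : littleo n (fun t => F t - G t)%C -> coefF 0%nat = 0%C.
Proof.
  intros HL. apply (littleo_limit n _ _ HL).
  apply (bigO_ext 1 (fun t => (peval (S n) coefF t - coefF 0%nat) - G t)%C).
  - intros t. rewrite (F_peval (S n)) by lia. ring.
  - apply bigO_minus; [apply bigO_peval_sub_head | apply bigO_G].
Qed.

Lemma c_1_of_littleo : littleo n (fun t => F t - G t)%C -> (1 <= n)%nat ->
  c 1%nat = RtoC (sqrt re_ab0).
Proof.
  intros HL Hn. pose proof (coefF_0_of_littleo HL) as HF0.
  assert (HL' : littleo (pred n)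
    (fun t => peval n (fun k => coefF (S k)) t - RtoC (sqrt (re_AB t)))%C).
  { apply littleo_div_t. replace (S (pred n)) with n by lia.
    apply (littleo_ext n (fun t => F t - G t)%C); [intros; now apply F_sub_G | easy]. }
  assert (Hlim : (coefF 1%nat - RtoC (sqrt re_ab0))%C = 0%C).
  { apply (littleo_limit _ _ _ HL').
    apply (bigO_ext 1 (fun t => (peval n (fun k => coefF (S k)) t - coefF 1%nat)
      - (RtoC (sqrt (re_AB t)) - RtoC (sqrt re_ab0)))%C); [intros; ring|].
    apply bigO_minus; [now apply bigO_coefF_tail_sub | apply bigO_sqrt_re_AB_sub]. }
  rewrite coefF_le, ifact_1 in Hlim by easy.
  replace (c 1%nat) with (c 1%nat * RtoC 1 - RtoC (sqrt re_ab0) + RtoC (sqrt re_ab0))%C by ring.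
  rewrite Hlim. ring.
Qed.

Lemma defect_of_littleo : littleo n (fun t => F t - G t)%C ->
  forall k, (k <= S n)%nat -> defect k = 0%C.
Proof.
  intros HL. pose proof (coefF_0_of_littleo HL) as HF0.
  assert (Hsq : littleo (S n) (fun t => (F t - G t) * (F t + G t))%C).
  { apply littleo_mult; [easy|].
    apply (bigO_ext (1 + 0) (fun t => RtoC t
      * (peval n (fun k => coefF (S k)) t + RtoC (sqrt (re_AB t))))%C);
      [intros; now rewrite F_add_G|].
    apply bigO_mult; [apply bigO_id|].
    apply bigO_plus; [apply bigO_peval | apply bigO_sqrt_re_AB]. }
  apply (peval_littleo_coef_eq_0 (S n) (S (S n))); [lia|].
  apply (littleo_ext (S n) (fun t => (F t - G t) * (F t + G t)
    - ((F t - G t) * (F t + G t) - peval (S (S n)) defect t))%C); [intros; ring|].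
  apply littleo_minus; [easy | apply littleo_of_bigO, bigO_defect].
Qed.

Lemma defect_low : coefF 0%nat = 0%C -> coefF 1%nat = RtoC (sqrt re_ab0) ->
  forall k, (k <= 2)%nat -> defect k = 0%C.
Proof.
  intros HF0 HF1 k Hk. unfold defect, cauchy_prod.
  destruct k as [|[|[|k]]]; [| | |lia]; simpl; rewrite ?HF0; [ring | ring|].
  rewrite HF1. unfold coefA, coefB. rewrite ifact_0.
  replace (a 0%nat * RtoC 1 * (b 0%nat * RtoC 1))%C with (a 0%nat * b 0%nat)%C by ring.
  rewrite (C_real (a 0%nat * b 0%nat)), <- RtoC_mult, sqrt_sqrt
    by (apply Rlt_le, Hab0 || apply Hab0).
  fold re_ab0. ring.
Qed.

Lemma littleo_of_coefs : c 0%nat = 0%C ->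
  ((1 <= n)%nat -> c 1%nat = RtoC (sqrt re_ab0) /\
                   forall k, (3 <= k <= S n)%nat -> defect k = 0%C) ->
  littleo n (fun t => F t - G t)%C.
Proof.
  intros Hc0 Hhigh. assert (HF0 : coefF 0%nat = 0%C) by now rewrite coefF_0.
  destruct (Nat.eq_dec n 0) as [Hn|Hn].
  { rewrite Hn. apply littleo_of_bigO.
    apply (bigO_ext (1 + 0) (fun t => RtoC t
      * (peval n (fun k => coefF (S k)) t - RtoC (sqrt (re_AB t))))%C);
      [intros; now rewrite F_sub_G|].
    apply bigO_mult; [apply bigO_id|].
    apply bigO_minus; [apply bigO_peval | apply bigO_sqrt_re_AB]. }
  destruct (Hhigh ltac:(lia)) as [Hc1 Hdef].
  assert (HF1 : coefF 1%nat = RtoC (sqrt re_ab0)) by (rewrite coefF_le, ifact_1, Hc1 by lia; ring).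
  set (Y := fun t => (peval n (fun k => coefF (S k)) t + RtoC (sqrt (re_AB t)))%C).
  assert (HY : bigO 1 (fun t => Y t - RtoC (2 * sqrt re_ab0))%C).
  { apply (bigO_ext 1 (fun t => (peval n (fun k => coefF (S k)) t - coefF 1%nat)
      + (RtoC (sqrt (re_AB t)) - RtoC (sqrt re_ab0)))%C).
    { intros t. unfold Y. rewrite HF1, RtoC_mult. ring. }
    apply bigO_plus; [apply bigO_coefF_tail_sub; lia | apply bigO_sqrt_re_AB_sub]. }
  assert (Hsq : bigO (S (S n)) (fun t => RtoC t * ((F t - G t) * Y t))%C).
  { apply (bigO_ext (S (S n)) (fun t => (F t - G t) * (F t + G t) - peval (S (S n)) defect t)%C);
      [|apply bigO_defect].
    intros t. rewrite (peval_eq_0 (S (S n)) defect t), (F_add_G t HF0); [fold (Y t); ring|].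
    intros k Hk. destruct (Nat.le_gt_cases k 2); [now apply defect_low | apply Hdef; lia]. }
  apply (littleo_div_bounded_below n _ Y (sqrt re_ab0) sqrt_re_ab0_pos).
  - destruct (Cmod_ge_half_near_limit Y (RtoC (2 * sqrt re_ab0))) as [d [Hd HYd]]; [|easy|].
    { intros E. apply RtoC_inj in E. pose proof sqrt_re_ab0_pos. lra. }
    exists d. split; [easy|]. intros t Ht. specialize (HYd t Ht).
    rewrite Cmod_R, Rabs_pos_eq in HYd by (pose proof sqrt_re_ab0_pos; lra). lra.
  - apply littleo_div_t, littleo_of_bigO, Hsq.
Qed.

Lemma littleo_iff_coef_formula :
  littleo n (fun t => F t - G t)%C <-> (forall m, (m <= n)%nat -> coef_formula m).
Proof.
  split.
  - intros HL m Hm. assert (Hc0 : c 0%nat = 0%C) by now rewrite <- coefF_0, coefF_0_of_littleo.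
    destruct m as [|[|m]].
    + now apply coef_formula_0.
    + apply coef_formula_1, c_1_of_littleo; [easy | lia].
    + apply coef_formula_iff_defect;
        [lia | easy | apply c_1_of_littleo; [easy | lia] | apply defect_of_littleo; [easy | lia]].
  - intros Hf. assert (Hc0 : c 0%nat = 0%C) by (apply coef_formula_0, Hf; lia).
    apply littleo_of_coefs; [easy|]. intros Hn.
    assert (Hc1 : c 1%nat = RtoC (sqrt re_ab0)) by (apply coef_formula_1, Hf; easy).
    split; [easy|]. intros k Hk. replace k with (S (k - 1)) by lia.
    apply (coef_formula_iff_defect (k - 1)); [lia | easy | easy | apply Hf; lia].
Qed.

End Coefficients.

Theorem lemma9 (U : C -> Prop) (n : nat) (fm : nat -> C -> R) :
  jordan_domain U ->
  (forall m, (m <= n)%nat -> C2_on U (fm m)) ->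
  (forall z, U z ->
     Im (f_ww (fm 0%nat) z * f_wbwb (fm 0%nat) z)%C = 0 /\
     0 < Re (f_ww (fm 0%nat) z * f_wbwb (fm 0%nat) z)%C) ->
  ( (* f_{w wbar} = t sqrt(f_ww f_wbwb) + o(t^n) as t -> 0, at every w *)
    (forall z, U z ->
       forall eps, 0 < eps -> exists delta, 0 < delta /\
         forall t, 0 < Rabs t < delta ->
           Cmod (f_wwb (ftaylor fm n t) z
                 - RtoC (t * sqrt (Re (f_ww (ftaylor fm n t) z
                                       * f_wbwb (ftaylor fm n t) z)%C)))%C
           <= eps * Rabs t ^ n)
    <->
    (forall m, (m <= n)%nat -> forall z, U z ->
       f_wwb (fm m) z =
       ((RtoC (INR m) * csum_range 0 m
            (fun r => RtoC (binom (m - 1) r)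
                      * f_ww (fm r) z * f_wbwb (fm (m - r - 1)%nat) z)
         - RtoC (/ INR (m + 1)) * csum_range 2 m
            (fun r => RtoC (binom (m + 1) r)
                      * f_wwb (fm r) z * f_wwb (fm (m - r + 1)%nat) z))
        / RtoC (2 ^ (1 - kdelta m 1)%nat
                * sqrt (Re (f_ww (fm 0%nat) z * f_wbwb (fm 0%nat) z)%C)))%C)).
Proof.
  intros HJ HC Hpos. pose proof (jordan_domain_open U HJ) as HU.
  assert (Hpoint : forall z, U z ->
    littleo n (fun t => f_wwb (ftaylor fm n t) z
      - RtoC (t * sqrt (Re (f_ww (ftaylor fm n t) z * f_wbwb (ftaylor fm n t) z))))%C
    <-> forall m, (m <= n)%nat ->
        coef_formula (fun r => f_ww (fm r) z) (fun r => f_wbwb (fm r) z)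
          (fun r => f_wwb (fm r) z) m).
  { intros z Hz. apply littleo_iff_coef_formula.
    - intros t. now apply (wirtinger_ftaylor _ _ _ _ _ f_ww_hess U).
    - intros t. now apply (wirtinger_ftaylor _ _ _ _ _ f_wbwb_hess U).
    - intros t. now apply (wirtinger_ftaylor _ _ _ _ _ f_wwb_hess U).
    - intros t. rewrite f_ww_mul_f_wbwb. split; [easy | apply pow2_ge_0].
    - now apply Hpos. }
  split.
  - intros H m Hm z Hz. exact (proj1 (Hpoint z Hz) (H z Hz) m Hm).
  - intros H z Hz. apply (Hpoint z Hz). intros m Hm. exact (H m Hm z Hz).
Qed.
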